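(* Let $G$ be a connected graph with vertex set $\{u_1,\dots,u_n\}$, $n\ge2$, and let $\mathcal{H}=\{H_1,\dots,H_n\}$ be a family of non-empty graphs. Then $\dim_l(G\circ\mathcal{H})=n$ if and only if each true twin equivalence class of $G$ contains at most one vertex $u_i$ with $H_i\in\mathcal{G}$, and each $H_i$ is a bipartite graph having exactly one non-trivial connected component $H_i^*$, and this component has radius $r(H_i^* )\le2$.
   Context: All graphs are finite and simple with at least one vertex; non-empty means having at least one edge; a non-trivial connected component is one with at least two vertices. $d_G$ is shortest-path distance ($+\infty$ between components), $d_{G,2}=\min\{d_G,2\}$; $s$ distinguishes $x,y$ w.r.t. $d$ if $d(s,x)\ne d(s,y)$. $\dim_l(G)$: minimum size of $S\subseteq V(G)$ such that any two adjacent vertices are distinguished w.r.t. $d_G$ by some vertex of $S$. Local adjacency bases of $H$: minimum-size sets $S\subseteq V(H)$ such that any two adjacent vertices are distinguished w.r.t. $d_{H,2}$ by some vertex of $S$. $\mathcal{G}$: class of graphs $H$ such that every local adjacency basis $B$ of $H$ satisfies $B\subseteq N_H(v)$ for some $v\in V(H)$. True twins: $N[x]=N[y]$. Lexicographic product $G\circ\mathcal{H}$: vertex set $\bigcup_i\{u_i\}\times V(H_i)$, $(u_i,v)\sim(u_j,w)$ iff $u_iu_j\in E(G)$, or $i=j$ and $vw\in E(H_i)$. *)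

From mathcomp Require Import all_boot.
Set Implicit Arguments. Unset Strict Implicit. Unset Printing Implicit Defensive.

Section Graphs.
Variable T : finType.
Implicit Types (e : rel T) (S C : {set T}) (x y s v w : T).

Definition simple_graph e := symmetric e /\ irreflexive e.
Definition nonempty_graph e := exists x y, e x y.
Definition connected_graph e := forall x y, connect e x y.

Fixpoint within e (k : nat) x y : bool :=
  if k is k'.+1 then within e k' x y || [exists z, within e k' x z && e z y]
  else x == y.

(* shortest-path distance; None stands for +infinity (different components) *)
Definition dist e x y : option nat :=
  let k := find (fun k => within e k x y) (iota 0 #|T|.+1) in
  if k <= #|T| then Some k else None.

Definition dist2 e x y : nat :=
  if dist e x y is Some k then minn k 2 else 2.

Definition local_resolving e S : bool :=
  [forall x, forall y, e x y ==> [exists s in S, dist e s x != dist e s y]].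

Definition local_dim e : nat :=
  \big[minn/#|T|]_(S : {set T} | local_resolving e S) #|S|.

Definition adj_local_resolving e S : bool :=
  [forall x, forall y, e x y ==> [exists s in S, dist2 e s x != dist2 e s y]].

Definition adj_local_dim e : nat :=
  \big[minn/#|T|]_(S : {set T} | adj_local_resolving e S) #|S|.

Definition local_adjacency_basis e S : Prop :=
  adj_local_resolving e S /\ #|S| = adj_local_dim e.

Definition open_nbhd e v : {set T} := [set w | e v w].
Definition closed_nbhd e v : {set T} := v |: open_nbhd e v.

Definition in_classG e : Prop :=
  forall B, local_adjacency_basis e B -> exists v, B \subset open_nbhd e v.

Definition true_twins e x y : Prop := closed_nbhd e x = closed_nbhd e y.

Definition bipartite e : Prop :=
  exists c : T -> bool, forall x y, e x y -> c x != c y.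

Definition component e x : {set T} := [set y | connect e x y].

Definition nontrivial_component e C : Prop :=
  exists x, C = component e x /\ 1 < #|C|.

(* eccentricity of v inside the component C (distances inside a connected
   component coincide with those of the whole graph, and are finite) *)
Definition ecc_in e C v : nat := \max_(w in C) odflt 0 (dist e v w).
Definition radius_of e C : nat := \big[minn/#|T|]_(v in C) ecc_in e C v.

End Graphs.

Definition lex_prod (n : nat) (eG : rel 'I_n) (V : 'I_n -> finType)
  (E : forall i, rel (V i)) : rel {i : 'I_n & V i} :=
  fun p q => eG (tag p) (tag q) ||
             ((tag q == tag p) && E (tag p) (tagged p) (tagged_as p q)).

(* Adjacent vertices in one fibre {u_i} x V(H_i) are at equal distance from
   every vertex outside it, so a local resolving set S of G o H meets every
   fibre and |S| >= n.  Inside a fibre all distances are min(d_{H_i}, 2);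
   hence |S| = n forces one vertex s_i per fibre, each alone locally resolving
   H_i for d_{H_i,2}.  A single vertex s does so iff H_i is bipartite (colour
   by adjacency to s) with a unique non-trivial component, within distance 2
   of s.  Between fibres, true twins of G are indistinguishable from outside,
   so G must be twin-free; conversely, when G is twin-free, any vertex of G in
   the symmetric difference of N[u_i] and N[u_j] gives a representative s_w
   separating the fibres of u_i and u_j.  As every graph with a one-vertex
   local adjacency basis lies in the class \mathcal{G}, the twin condition of the
   statement amounts to G being twin-free. *)
From mathcomp Require Import all_boot all_order.
Set Implicit Arguments. Unset Strict Implicit. Unset Printing Implicit Defensive.
Import Order.TTheory.

Section Distance.
Variables (T : finType) (e : rel T).
Implicit Types (x y w : T) (S : {set T}).

Lemma within_refl k x : within e k x x.
Proof. by elim: k => [|k IH] /=; rewrite ?eqxx ?IH. Qed.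

Lemma within_mono k k' x y : k <= k' -> within e k x y -> within e k' x y.
Proof.
elim: k' => [|k' IH]; first by rewrite leqn0 => /eqP ->.
by rewrite leq_eqVlt ltnS => /predU1P[-> //|/IH Hk Hw] /=; rewrite Hk.
Qed.

Lemma within1E x y : within e 1 x y = (x == y) || e x y.
Proof.
apply/orP/orP => -[Hxy|]; try by left.
  by case/existsP => z /andP[/eqP <- ->]; right.
by move=> Exy; right; apply/existsP; exists x; rewrite eqxx.
Qed.

Lemma within2E x y :
  within e 2 x y = [|| x == y, e x y | [exists z, e x z && e z y]].
Proof.
rewrite -[LHS]/(within e 1 x y || [exists z, within e 1 x z && e z y]).
rewrite within1E -orbA; congr (_ || _); apply/orP/orP => -[Exy|].
- by left.
- case/existsP => z /andP[]; rewrite within1E => /predU1P[<- ->|Exz Ezy]; first by left.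
  by right; apply/existsP; exists z; rewrite Exz.
- by right; apply/existsP; exists x; rewrite within1E eqxx.
- case/existsP => z /andP[Exz Ezy]; right.
  by apply/existsP; exists z; rewrite within1E Exz orbT.
Qed.

Lemma dist_Some_within x y k : dist e x y = Some k ->
  within e k x y /\ forall k', k' < k -> ~~ within e k' x y.
Proof.
rewrite /dist; set f := find _ _; case: ifP => // Hf [<-].
have Hs : f < size (iota 0 #|T|.+1) by rewrite size_iota ltnS.
split; first by move: Hs; rewrite -has_find => /(nth_find 0); rewrite nth_iota.
move=> k' Hk'; have := before_find 0 Hk'.
rewrite nth_iota ?add0n => [->//|]; exact: ltnW (leq_trans Hk' Hf).
Qed.

Lemma dist_leq_card x y k : dist e x y = Some k -> k <= #|T|.
Proof. by rewrite /dist; case: ifP => // Hk [<-]. Qed.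

Lemma within_dist_le x y k : k <= #|T| -> within e k x y ->
  exists2 k', k' <= k & dist e x y = Some k'.
Proof.
move=> Hk Hw; set f := find (fun k => within e k x y) (iota 0 #|T|.+1).
have Hf : f <= k.
  rewrite leqNgt; apply/negP => /(before_find 0).
  by rewrite nth_iota ?add0n ?Hw // ltnS.
by exists f; rewrite // /dist -/f (leq_trans Hf Hk).
Qed.

Lemma dist0 x : dist e x x = Some 0.
Proof. by have [k' + ->] := within_dist_le (leq0n _) (within_refl 0 x); case: k'. Qed.

Lemma eq_dist x y x' y' : (forall k, within e k x y = within e k x' y') ->
  dist e x y = dist e x' y'.
Proof. by move=> H; rewrite /dist (eq_find H). Qed.

Lemma dist2E x y : dist2 e x y = if x == y then 0 else if e x y then 1 else 2.
Proof.
rewrite /dist2; case: eqVneq => [<-|nxy]; first by rewrite dist0.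
case Hd: (dist e x y) => [[|[|k]]|].
- by case: (dist_Some_within Hd) => /= /eqP Exy; rewrite Exy eqxx in nxy.
- by case: (dist_Some_within Hd); rewrite within1E (negPf nxy) /= => ->.
- case: ifP => // Exy; have [_ /(_ 1 isT)] := dist_Some_within Hd.
  by rewrite within1E Exy orbT.
- case: ifP => // Exy; have Hw : within e 1 x y by rewrite within1E Exy orbT.
  have H1 : 1 <= #|T| by apply/card_gt0P; exists x.
  by have [k _] := within_dist_le H1 Hw; rewrite Hd.
Qed.

Lemma dist_within2 x y : within e 2 x y -> dist e x y = Some (dist2 e x y).
Proof.
case: (eqVneq x y) => [<-|nxy Hw]; first by rewrite dist0 /dist2 dist0.
have H2 : 2 <= #|T| by have := cards2 x y; rewrite nxy => <-; exact: max_card.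
by have [k Hk Hd] := within_dist_le H2 Hw; rewrite /dist2 Hd (minn_idPl Hk).
Qed.

Lemma dist_adj x y : x != y -> e x y -> dist e x y = Some 1.
Proof.
move=> nxy Exy; rewrite dist_within2 ?dist2E ?(negPf nxy) ?Exy //.
by apply: (@within_mono 1); rewrite ?within1E ?Exy ?orbT.
Qed.

Lemma dist2_le2 x y : dist2 e x y <= 2.
Proof. by rewrite /dist2; case: (dist e x y) => [k|] //; exact: geq_minr. Qed.

Lemma dist1 x y : dist e x y = Some 1 -> (x == y) || e x y.
Proof. by case/dist_Some_within; rewrite within1E. Qed.

Lemma path_within x p : path e x p -> within e (size p) x (last x p).
Proof.
elim/last_ind: p => [|p z IH]; first by rewrite /= eqxx.
rewrite rcons_path size_rcons last_rcons => /andP[/IH Hw Hl] /=.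
by apply/orP; right; apply/existsP; exists (last x p); rewrite Hw.
Qed.

Lemma connect_dist x y : connect e x y -> exists k, dist e x y = Some k.
Proof.
case/connectP => p Hp ->; case: (shortenP Hp) => p' Hp' Hu _.
have Hs : size p' <= #|T|.
  by apply: leq_trans (max_card (mem (x :: p'))); rewrite (card_uniqP Hu) leqnSn.
by have [k _ Hd] := within_dist_le Hs (path_within Hp'); exists k.
Qed.

Lemma within_connect k x y : within e k x y -> connect e x y.
Proof.
elim: k y => [|k IH] y /=; first by move/eqP->.
case/orP=> [/IH //|/existsP[z /andP[/IH Hxz Ezy]]].
exact: connect_trans Hxz (connect1 Ezy).
Qed.

Lemma connect_nbr x y : connect e x y -> x != y -> exists z, e x z.
Proof.
move=> Hxy nxy; case/connectP: Hxy => [[|z p]] /=.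
  by move=> _ Exy; rewrite Exy eqxx in nxy.
by case/andP=> Exz _ _; exists z.
Qed.

Lemma local_resolving_setT : irreflexive e -> local_resolving e setT.
Proof.
move=> Hirr; apply/forallP => x; apply/forallP => y; apply/implyP => Exy.
apply/exists_inP; exists x; rewrite ?inE // dist0; apply/eqP => /esym/dist_Some_within[].
by move=> /= /eqP Eyx; rewrite Eyx Hirr in Exy.
Qed.

Lemma local_dim_attained : irreflexive e ->
  exists2 S, local_resolving e S & #|S| = local_dim e.
Proof.
move=> Hirr; have [S HS HSdim] := @eq_bigmin _ nat _ #|T| _ (local_resolving e)
  (fun S => #|S|) (local_resolving_setT Hirr) (fun S _ => max_card (mem S)).
by exists S; last exact: esym HSdim.
Qed.

Lemma twin_within x y w : symmetric e -> true_twins e x y -> w != x -> w != y ->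
  forall k, within e k w x = within e k w y.
Proof.
move=> Hsym Ht nwx nwy.
suff step x' y' : true_twins e x' y' -> forall k,
    within e k w x' = within e k w y' -> within e k.+1 w x' -> within e k.+1 w y'.
  elim=> [|k IH]; first by rewrite /= (negPf nwx) (negPf nwy).
  by apply/idP/idP; apply: step; rewrite // /true_twins Ht.
move=> Ht' k IH /= /orP[|/existsP[z /andP[Hz Ezx]]]; first by rewrite IH => ->.
case: (eqVneq z y') => [<-|nzy]; first by rewrite Hz.
have : z \in closed_nbhd e x' by rewrite !inE Hsym Ezx orbT.
rewrite Ht' !inE (negPf nzy) /= => Eyz.
by apply/orP; right; apply/existsP; exists z; rewrite Hz Hsym.
Qed.

End Distance.

Section AdjResolvingVertex.
Variables (T : finType) (e : rel T).
Hypotheses (Hsym : symmetric e) (Hirr : irreflexive e) (Hne : nonempty_graph e).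
Implicit Types (x y s v w : T) (C : {set T}).

Definition adj_resolving_vertex s :=
  forall x y, e x y -> dist2 e s x != dist2 e s y.

Definition unique_nontrivial_component_radius_le2 :=
  exists C, nontrivial_component e C /\
    (forall C', nontrivial_component e C' -> C' = C) /\ radius_of e C <= 2.

Lemma adj_local_resolving1 s :
  adj_local_resolving e [set s] <-> adj_resolving_vertex s.
Proof.
split=> [/forallP H x y Exy | H].
  have /forallP/(_ y) := H x; rewrite Exy => /exists_inP[t].
  by rewrite inE => /eqP ->.
apply/forallP => x; apply/forallP => y; apply/implyP => Exy.
by apply/exists_inP; exists s; [rewrite inE | exact: H].
Qed.

Lemma adj_resolving_vertex_edge s x y : adj_resolving_vertex s -> e x y ->
  [|| s == x, e s x, s == y | e s y].
Proof.
move=> H Exy; have := H x y Exy; rewrite !dist2E.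
by case: (s == x); case: (e s x); case: (s == y); case: (e s y).
Qed.

Lemma adj_resolving_vertex_nbr s : adj_resolving_vertex s -> exists v, e s v.
Proof.
move=> H; have [x [y Exy]] := Hne.
case/or4P: (adj_resolving_vertex_edge H Exy) => [/eqP->|Esx|/eqP->|Esy].
- by exists y.
- by exists x.
- by exists x; rewrite Hsym.
- by exists y.
Qed.

(* If x is outside N[s] then d_2(s, x) = 2, so y must lie in N[s]. *)
Lemma adj_resolving_vertex_within2 s x y : adj_resolving_vertex s -> e x y ->
  within e 2 s y.
Proof.
move=> H Exy; rewrite within2E.
case: (eqVneq s x) => [->|nsx]; first by rewrite Exy orbT.
case Esx: (e s x); first by apply/or3P/Or33/existsP; exists x; rewrite Esx.
move: (H x y Exy); rewrite !dist2E (negPf nsx) Esx.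
by case: (s == y); case: (e s y).
Qed.

Lemma adj_resolving_vertex_bipartite s : adj_resolving_vertex s -> bipartite e.
Proof.
move=> H; exists (e s) => x y Exy; have := H x y Exy; rewrite !dist2E.
case: (eqVneq s x) => [->|_]; first by rewrite Hirr Exy.
case: (eqVneq s y) => [->|_]; first by rewrite Hirr Hsym Exy.
by case: (e s x); case: (e s y).
Qed.

Lemma component_eq x y : connect e x y -> component e x = component e y.
Proof.
move=> Hxy; apply/setP => z; rewrite !inE.
exact: (same_connect (sym_connect_sym Hsym) Hxy).
Qed.

Lemma edge_component_card x y : e x y -> 1 < #|component e x|.
Proof.
move=> Exy; have nxy : x != y by apply: contraTneq Exy => ->; rewrite Hirr.
have := cards2 x y; rewrite nxy => <-; apply: subset_leq_card.
by apply/subsetP => z; rewrite !inE => /predU1P[->|/eqP->];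
  [exact: connect0 | exact: connect1].
Qed.

Lemma component_nbr x : 1 < #|component e x| -> exists z, e x z.
Proof.
move=> Hc; have [y Hy nyx] : exists2 y, y \in component e x & y != x.
  apply/exists_inP; apply: contraTT Hc => /exists_inPn Hn.
  rewrite -leqNgt -(cards1 x); apply: subset_leq_card.
  by apply/subsetP => z /Hn; rewrite negbK inE.
by move: Hy; rewrite inE => /connect_nbr; apply; rewrite eq_sym.
Qed.

Lemma adj_resolving_vertex_core s :
  adj_resolving_vertex s -> unique_nontrivial_component_radius_le2.
Proof.
move=> H; have [v Esv] := adj_resolving_vertex_nbr H.
have Hs : s \in component e s by rewrite inE connect0.
exists (component e s); split.
  by exists s; split; last exact: edge_component_card Esv.
split.
  move=> _ [x [-> /component_nbr[z Exz]]]; apply/esym/component_eq.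
  have Ezx : e z x by rewrite Hsym.
  exact: within_connect (adj_resolving_vertex_within2 H Ezx).
apply: (@leq_trans (ecc_in e (component e s) s)).
  exact: (@bigmin_le_cond _ nat _ _ s _ _ Hs).
apply/bigmax_leqP => w.
rewrite inE (sym_connect_sym Hsym) => Hws.
case: (eqVneq w s) => [->|nws]; first by rewrite dist0.
have [z Ewz] := connect_nbr Hws nws.
have Ezw : e z w by rewrite Hsym.
by rewrite dist_within2 ?dist2_le2 // (adj_resolving_vertex_within2 H Ezw).
Qed.

Lemma radius_le2_center : unique_nontrivial_component_radius_le2 ->
  exists v, forall x y, e x y -> within e 2 v x.
Proof.
case=> C [[x0 [HC0 HC1]] [Huniq Hrad]].
have ecc_le v : ecc_in e C v <= #|T|.
  apply/bigmax_leqP => w _.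
  by case Hd: (dist e v w) => [k|] //=; exact: dist_leq_card Hd.
have Hx0 : x0 \in C by rewrite HC0 inE connect0.
have [v Hv Hecc] := @eq_bigmin _ nat _ #|T| x0 (mem C) (ecc_in e C) Hx0
  (fun v _ => ecc_le v).
exists v => x y Exy.
have Hx : x \in C.
  rewrite -(Huniq (component e x)) ?inE ?connect0 //.
  by exists x; split; last exact: edge_component_card Exy.
have Hvx : connect e v x.
  move: Hv Hx; rewrite HC0 !inE => Hv.
  by rewrite -(same_connect (sym_connect_sym Hsym) Hv).
have [k Hk] := connect_dist Hvx.
have Hk2 : k <= 2.
  apply: leq_trans Hrad; rewrite /radius_of Hecc.
  by have := @leq_bigmax_cond _ (mem C) (fun w => odflt 0 (dist e v w)) x Hx; rewrite Hk.
by apply: within_mono Hk2 _; case: (dist_Some_within Hk).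
Qed.

(* Both ends of an edge at distance 1, or both at distance 2, from v would
   close a cycle of length 3 or 5 through v. *)
Lemma bipartite_center_adj_resolving v : bipartite e ->
  (forall x y, e x y -> within e 2 v x) -> adj_resolving_vertex v.
Proof.
case=> c Hc Hball x y Exy.
have Hx := Hball x y Exy; have Hy : within e 2 v y by apply: (Hball y x); rewrite Hsym.
rewrite !within2E in Hx Hy; rewrite !dist2E.
have nxy : x != y by apply: contraTneq Exy => ->; rewrite Hirr.
case: (eqVneq v x) => [->|nvx]; first by rewrite (negPf nxy) Exy.
case: (eqVneq v y) => [->|nvy]; first by case: ifP.
case Evx: (e v x); case Evy: (e v y) => //.
- have := Hc v x Evx; have := Hc v y Evy; have := Hc x y Exy.
  by case: (c v); case: (c x); case: (c y).
- move: Hx Hy; rewrite ?(negPf nvx) ?(negPf nvy) Evx Evy /=.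
  case/existsP=> a /andP[Eva Eax]; case/existsP=> b /andP[Evb Eby].
  have := Hc v a Eva; have := Hc a x Eax; have := Hc v b Evb.
  have := Hc b y Eby; have := Hc x y Exy.
  by case: (c v); case: (c x); case: (c y); case: (c a); case: (c b).
Qed.

Lemma adj_resolving_vertexP : (exists s, adj_resolving_vertex s) <->
  bipartite e /\ unique_nontrivial_component_radius_le2.
Proof.
split=> [[s H]|[Hbip /radius_le2_center[v Hball]]].
  split; first exact: adj_resolving_vertex_bipartite H.
  exact: adj_resolving_vertex_core H.
by exists v; exact: bipartite_center_adj_resolving.
Qed.

(* Every local adjacency basis is then a singleton {t}, and t resolves e on its
   own, hence has a neighbour v with {t} in N(v). *)
Lemma adj_resolving_vertex_in_classG s : adj_resolving_vertex s -> in_classG e.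
Proof.
move=> H B [HB HBdim].
have Hdim1 : adj_local_dim e <= 1.
  have Hs : adj_local_resolving e [set s] by apply/adj_local_resolving1.
  rewrite -(cards1 s).
  exact: (@bigmin_le_cond _ nat _ _ _ (adj_local_resolving e) (fun S => #|S|) Hs).
have [t Ht] : exists t, t \in B.
  have [x [y Exy]] := Hne; move/forallP/(_ x)/forallP/(_ y): HB.
  by rewrite Exy => /exists_inP[t Ht _]; exists t.
have /cards1P[t' HBt'] : #|B| == 1.
  by rewrite eqn_leq HBdim Hdim1 -HBdim card_gt0; apply/set0Pn; exists t.
move: HB; rewrite HBt' => /adj_local_resolving1/adj_resolving_vertex_nbr[v Etv].
by exists v; apply/subsetP => z; rewrite inE => /eqP ->; rewrite inE Hsym.
Qed.

End AdjResolvingVertex.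

Section LexProduct.
Variables (n : nat) (eG : rel 'I_n) (V : 'I_n -> finType).
Variable E : forall i, rel (V i).
Arguments E : clear implicits.
Hypotheses (Hn : 2 <= n) (HG : simple_graph eG) (Hc : connected_graph eG).
Hypotheses (HS : forall i, simple_graph (E i)) (HE : forall i, nonempty_graph (E i)).

Local Notation T := {i : 'I_n & V i}.
Local Notation P := (lex_prod eG E).

Lemma lex_prod_fiber i (x y : V i) : P (Tagged V x) (Tagged V y) = E i x y.
Proof. by rewrite /lex_prod /= tagged_asE eqxx HG.2. Qed.

Lemma lex_prod_across (p q : T) : tag p != tag q -> P p q = eG (tag p) (tag q).
Proof. by move=> npq; rewrite /lex_prod eq_sym (negPf npq) orbF. Qed.

Lemma lex_prod_irr : irreflexive P.
Proof. by move=> [i x]; rewrite lex_prod_fiber (HS i).2. Qed.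

Lemma eG_nbr i : exists j, eG i j.
Proof.
have [j nij] : exists j : 'I_n, i != j.
  case: (eqVneq i (Ordinal (ltnW Hn))) => [->|ni0]; last by exists (Ordinal (ltnW Hn)).
  by exists (Ordinal Hn).
exact: connect_nbr (Hc i j) nij.
Qed.

(* Walks leaving the fibre of a vertex project onto walks of G, and conversely
   every walk of G lifts since all fibres are non-empty. *)
Lemma within_lex_prod_off_fiber k (w : T) i (a : V i) : tag w != i ->
  within P k w (Tagged V a) = within eG k (tag w) i.
Proof.
elim: k i a => [|k IH] i a nwi.
  by rewrite /= (negPf nwi); apply: contraNF nwi => /eqP ->.
rewrite /= IH //; apply/orP/orP => -[->|]; [by left | | by left |].
- case/existsP => -[l c] /andP[Hwc Pca].
  case: (eqVneq l i) => [Eli|nli]; first by subst l; left; rewrite -(IH i c).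
  have Eli : eG l i by rewrite -(@lex_prod_across (Tagged V c) (Tagged V a)).
  right; apply/existsP; case: (eqVneq (tag w) l) => [Ewl|nwl].
    by exists l; rewrite -Ewl within_refl Ewl.
  by exists l; rewrite -(IH l c) // Hwc.
- case/existsP => l /andP[Hwl Eli]; right; apply/existsP.
  have nli : l != i by apply: contraTneq Eli => ->; rewrite HG.2.
  case: (eqVneq (tag w) l) => [Ewl|nwl].
    by exists w; rewrite within_refl lex_prod_across // Ewl.
  have [c _] := HE l.
  by exists (Tagged V c); rewrite IH // Hwl lex_prod_across.
Qed.

Lemma dist_lex_prod_off_fiber (w : T) i (a b : V i) : tag w != i ->
  dist P w (Tagged V a) = dist P w (Tagged V b).
Proof. by move=> nwi; apply: eq_dist => k; rewrite !within_lex_prod_off_fiber. Qed.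

(* Two vertices of a fibre have a common neighbour in any adjacent fibre. *)
Lemma dist_lex_prod_fiber i (s c : V i) :
  dist P (Tagged V s) (Tagged V c) = Some (dist2 (E i) s c).
Proof.
have [j Eij] := eG_nbr i; have [y _] := HE j.
have nij : i != j by apply: contraTneq Eij => ->; rewrite HG.2.
have nji : j != i by rewrite eq_sym.
rewrite dist_within2 ?dist2E ?eq_Tagged ?lex_prod_fiber //.
rewrite within2E; apply/or3P/Or33/existsP; exists (Tagged V y).
by rewrite !lex_prod_across //= Eij HG.1.
Qed.

Lemma local_resolving_fiber_witness S i (a b : V i) :
  local_resolving P S -> E i a b ->
  exists2 s : V i, Tagged V s \in S & dist2 (E i) s a != dist2 (E i) s b.
Proof.
move=> /forallP/(_ (Tagged V a))/forallP/(_ (Tagged V b)).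
rewrite lex_prod_fiber => /implyP H /H /exists_inP[[j s] HsS].
case: (eqVneq j i) => [Eji|nji].
  by subst j; rewrite !dist_lex_prod_fiber => Hd; exists s => //; apply: contraNneq Hd => ->.
by rewrite (@dist_lex_prod_off_fiber (Tagged V s) _ a b nji) eqxx.
Qed.

Lemma local_resolving_meets_fiber S i : local_resolving P S ->
  exists s : V i, Tagged V s \in S.
Proof.
move=> Sres; have [a [b Eab]] := HE i.
by have [s Hs _] := local_resolving_fiber_witness Sres Eab; exists s.
Qed.

Lemma imset_tag_local_resolving S : local_resolving P S -> tag @: S = setT.
Proof.
move=> Sres; apply/setP => i; rewrite inE.
by have [s Hs] := local_resolving_meets_fiber i Sres; apply/imsetP; exists (Tagged V s).
Qed.

Lemma local_dim_lex_prod_ge : n <= local_dim P.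
Proof.
have card_ge S : local_resolving P S -> n <= #|S|.
  move=> Sres; have := leq_imset_card tag S.
  by rewrite imset_tag_local_resolving // cardsT card_ord.
apply: (@le_bigmin _ nat); last exact: card_ge.
by have := card_ge setT (local_resolving_setT lex_prod_irr); rewrite cardsT.
Qed.

Lemma local_resolving_tag_inj S : local_resolving P S -> #|S| = n ->
  {in S &, injective tag}.
Proof.
move=> Sres HSn; apply/imset_injP.
by rewrite imset_tag_local_resolving // cardsT card_ord HSn.
Qed.

Lemma local_resolving_fiber_vertex S i (s : V i) :
  local_resolving P S -> {in S &, injective tag} -> Tagged V s \in S ->
  adj_resolving_vertex (E i) s.
Proof.
move=> Sres Hinj Hs a b Eab.
have [s' Hs' Hd] := local_resolving_fiber_witness Sres Eab.
by have /eqP := Hinj _ _ Hs' Hs erefl; rewrite eq_Tagged => /eqP <-.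
Qed.

(* For adjacent true twins i, j, pick an edge between their fibres joining
   neighbours of the representatives of S in these fibres: each representative
   sees both ends at distance 1, and other vertices cannot tell twins apart. *)
Lemma local_resolving_twin_free S i j :
  local_resolving P S -> {in S &, injective tag} -> true_twins eG i j -> i = j.
Proof.
move=> Sres Hinj Htw; case: (eqVneq i j) => // nij; exfalso.
have Eij : eG i j.
  have : j \in closed_nbhd eG i by rewrite Htw !inE eqxx.
  by rewrite !inE eq_sym (negPf nij).
have fiber_nbr k : exists2 s : V k, Tagged V s \in S & exists x, E k s x.
  have [s Hs] := local_resolving_meets_fiber k Sres; exists s => //.
  apply: (adj_resolving_vertex_nbr (HS k).1 (HE k)).
  exact: local_resolving_fiber_vertex Sres Hinj Hs.
have dist_nbrs k (s x : V k) (q : T) : E k s x -> eG k (tag q) ->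
    dist P (Tagged V s) (Tagged V x) = dist P (Tagged V s) q.
  move=> Esx Ekq; have nkq : k != tag q by apply: contraTneq Ekq => ->; rewrite HG.2.
  rewrite !dist_adj ?lex_prod_fiber ?lex_prod_across //.
    by apply: contraNneq nkq => <-.
  by rewrite eq_Tagged /=; apply: contraTneq Esx => ->; rewrite (HS k).2.
have [si Hsi [a Ea]] := fiber_nbr i; have [sj Hsj [b Eb]] := fiber_nbr j.
move/forallP/(_ (Tagged V a))/forallP/(_ (Tagged V b)): Sres.
rewrite lex_prod_across //= Eij => /exists_inP[t Ht]; apply/negP; rewrite negbK.
case: (eqVneq (tag t) i) => [Eti|nti].
  have -> : t = Tagged V si by apply: Hinj; rewrite ?Eti.
  by rewrite (dist_nbrs _ _ _ (Tagged V b) Ea Eij).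
case: (eqVneq (tag t) j) => [Etj|ntj].
  have -> : t = Tagged V sj by apply: Hinj; rewrite ?Etj.
  by rewrite (dist_nbrs _ _ _ (Tagged V a) Eb) // HG.1.
apply/eqP/eq_dist => k; rewrite !within_lex_prod_off_fiber //.
exact: twin_within HG.1 Htw nti ntj k.
Qed.

Lemma dist_lex_prod_separate (t p q : T) : tag t != tag p -> tag t != tag q ->
  eG (tag t) (tag p) -> ~~ eG (tag t) (tag q) -> dist P t p != dist P t q.
Proof.
move=> ntp ntq Etp Etq.
rewrite (dist_adj (x := t) (y := p)) ?lex_prod_across //; last first.
  by apply: contra ntp => /eqP ->.
apply/eqP => /esym /dist1; rewrite lex_prod_across // (negPf Etq) orbF.
by move=> /eqP Etq'; rewrite Etq' eqxx in ntq.
Qed.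

(* Inside a fibre f i does the job; across fibres i, j some vertex of G lies
   in exactly one of the closed neighbourhoods of i and j. *)
Lemma transversal_local_resolving (f : forall i, V i) :
  (forall i, adj_resolving_vertex (E i) (f i)) ->
  (forall i j, true_twins eG i j -> i = j) ->
  local_resolving P [set Tagged V (f i) | i : 'I_n].
Proof.
move=> Hf Htf; apply/forallP => -[i a]; apply/forallP => -[j b].
apply/implyP => Hab.
case: (eqVneq i j) => [Eij|nij].
  subst j; apply/exists_inP; exists (Tagged V (f i)); first exact: imset_f.
  rewrite lex_prod_fiber in Hab.
  by rewrite !dist_lex_prod_fiber (inj_eq (@Some_inj _)) Hf.
rewrite lex_prod_across //= in Hab.
have [w Hw] : exists w, (w \in closed_nbhd eG i) != (w \in closed_nbhd eG j).
  apply/existsP; rewrite -negb_forall; apply: contra nij => /forallP Hij.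
  by rewrite (Htf i j) //; apply/setP => w; apply/eqP.
apply/exists_inP; exists (Tagged V (f w)); first exact: imset_f.
move: Hw; rewrite !inE.
case: (eqVneq w i) => [->|nwi] /=; first by rewrite HG.1 Hab orbT.
case: (eqVneq w j) => [->|nwj] /=; first by rewrite Hab.
case Eiw: (eG i w); case Ejw: (eG j w) => //= _.
  by apply: dist_lex_prod_separate => //=; rewrite HG.1 ?Eiw ?Ejw.
by rewrite eq_sym; apply: dist_lex_prod_separate => //=; rewrite HG.1 ?Eiw ?Ejw.
Qed.

Lemma local_dim_lex_prod_eq : local_dim P = n <->
  (forall i j, true_twins eG i j -> i = j) /\
  (forall i, exists s, adj_resolving_vertex (E i) s).
Proof.
split=> [Hdim | [Htf Hres]].
  have [S Sres HSn] := local_dim_attained lex_prod_irr; rewrite Hdim in HSn.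
  have Hinj := local_resolving_tag_inj Sres HSn.
  split=> [i j|i]; first exact: local_resolving_twin_free Sres Hinj.
  have [s Hs] := local_resolving_meets_fiber i Sres.
  by exists s; exact: local_resolving_fiber_vertex Sres Hinj Hs.
have Hres1 i : exists s, adj_local_resolving (E i) [set s].
  by have [s /adj_local_resolving1 Hs] := Hres i; exists s.
pose f i := xchoose (Hres1 i).
have Hf i : adj_resolving_vertex (E i) (f i).
  by apply/adj_local_resolving1; exact: xchooseP (Hres1 i).
have HSf := transversal_local_resolving Hf Htf.
apply/eqP; rewrite eqn_leq local_dim_lex_prod_ge andbT.
apply: (@leq_trans #|[set Tagged V (f i) | i : 'I_n]|).
  exact: (@bigmin_le_cond _ nat _ _ _ (local_resolving P) (fun S => #|S|) HSf).
by rewrite card_imset ?cardsT ?card_ord // => i j /(congr1 tag).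
Qed.

End LexProduct.

Theorem theorem3 (n : nat) (eG : rel 'I_n) (V : 'I_n -> finType)
    (E : forall i, rel (V i)) :
  2 <= n ->
  simple_graph eG -> connected_graph eG ->
  (forall i, simple_graph (E i)) -> (forall i, nonempty_graph (E i)) ->
  local_dim (lex_prod eG E) = n <->
  ((forall i j, true_twins eG i j -> in_classG (E i) -> in_classG (E j) -> i = j) /\
   (forall i, bipartite (E i) /\
      exists C, nontrivial_component (E i) C /\
        (forall C', nontrivial_component (E i) C' -> C' = C) /\
        radius_of (E i) C <= 2)).
Proof.
move=> Hn HG Hc HS HE.
have Hchar i := adj_resolving_vertexP (HS i).1 (HS i).2 (HE i).
apply: iff_trans (local_dim_lex_prod_eq Hn HG Hc HS HE) _.
split=> [[Htf Hres]|[Htw Hcore]].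
  by split=> [i j Hij _ _|i]; [exact: Htf | apply/Hchar; exact: Hres].
have Hres i : exists s, adj_resolving_vertex (E i) s by apply/Hchar; exact: Hcore.
have HclassG i : in_classG (E i).
  by have [s Hs] := Hres i; apply: (adj_resolving_vertex_in_classG (HS i).1 (HE i) Hs).
by split=> // i j Hij; exact: Htw Hij (HclassG i) (HclassG j).
Qed.
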